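(* Let $\langle A, \leq, \otimes, \mathbf{1}\rangle$ be a partially ordered monoid and let $C'(A) = \{c \in A \mid \exists a,b \in A.\ a < b \wedge a \otimes c = b \otimes c\}$. Then $C'(A)$ is an ideal of $A$. If moreover $\otimes$ is monotone (i.e. $a \leq b$ implies $a \otimes c \leq b \otimes c$ for all $a,b,c\in A$), then $I'(A) = A \setminus C'(A)$ is a sub-monoid of $\langle A,\otimes,\mathbf{1}\rangle$ and $C'(A)$ is a prime ideal of $A$.
   Context: A partially ordered monoid $\langle A, \leq, \otimes, \mathbf{1}\rangle$ consists of a partial order $\langle A,\leq\rangle$ and a commutative monoid $\langle A, \otimes, \mathbf{1}\rangle$; $a<b$ means $a\leq b$ and $a\neq b$. A subset $J\subseteq A$ is an ideal if $a\otimes c\in J$ for all $a\in A$, $c\in J$; it is prime if moreover $a\otimes b\in J$ implies $a\in J$ or $b\in J$. A sub-monoid is a subset containing $\mathbf{1}$ and closed under $\otimes$. *)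

From mathcomp Require Import all_boot all_order.
Set Implicit Arguments. Unset Strict Implicit. Unset Printing Implicit Defensive.
Import Order.TTheory.
Local Open Scope order_scope.

(* No compatibility between order and op is
   assumed. *)

Definition Cp {d} {T : porderType d} {one : T} (op : Monoid.com_law one)
  : T -> Prop :=
  fun c => exists a b : T, a < b /\ op a c = op b c.

Definition Ip {d} {T : porderType d} {one : T} (op : Monoid.com_law one)
  : T -> Prop :=
  fun c => ~ Cp op c.

Definition is_ideal {T : Type} {one : T} (op : Monoid.com_law one)
  (J : T -> Prop) : Prop :=
  forall a c : T, J c -> J (op a c).

Definition is_prime_ideal {T : Type} {one : T} (op : Monoid.com_law one)
  (J : T -> Prop) : Prop :=
  is_ideal op J /\ (forall a b : T, J (op a b) -> J a \/ J b).

Definition is_submonoid {T : Type} {one : T} (op : Monoid.com_law one)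
  (S : T -> Prop) : Prop :=
  S one /\ (forall a b : T, S a -> S b -> S (op a b)).

Definition op_monotone {d} {T : porderType d} (op : T -> T -> T) : Prop :=
  forall a b c : T, a <= b -> op a c <= op b c.

From mathcomp Require Import all_boot all_order.
Import Order.TTheory.
Local Open Scope order_scope.

(* A witness pair x < y for c is also one for a (x) c, since the equation
   x c = y c survives multiplication by a.  For primality, let x < y with
   x (a b) = y (a b).  Monotonicity gives x a <= y a: if x a = y a then x, y
   witness a, and otherwise x a < y a witness b. *)

Section CancellationIdeal.

Variables (d : Order.disp_t) (T : porderType d) (one : T).
Variable op : Monoid.com_law one.

Lemma Cp_ideal : is_ideal op (Cp op).
Proof.
move=> a c [x [y [lt_xy eq_xcyc]]]; exists x, y; split => //.
by rewrite (Monoid.mulmCA op x) (Monoid.mulmCA op y); congr (op a _).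
Qed.

Lemma Ip1 : Ip op one.
Proof.
move=> [x [y [lt_xy]]]; rewrite !Monoid.mulm1 => eq_xy.
by rewrite eq_xy ltxx in lt_xy.
Qed.

Hypothesis op_mono : op_monotone op.

Lemma Cp_mul (a b : T) : Cp op (op a b) -> Cp op a \/ Cp op b.
Proof.
move=> [x [y [lt_xy eq_xy_ab]]].
have le_xa_ya : op x a <= op y a by apply: op_mono; exact: ltW.
have [eq_xa_ya | ne_xa_ya] := eqVneq (op x a) (op y a).
  by left; exists x, y.
right; exists (op x a), (op y a); split; first by rewrite lt_neqAle ne_xa_ya.
by rewrite -!Monoid.mulmA.
Qed.

Lemma Cp_prime : is_prime_ideal op (Cp op).
Proof. by split; [exact: Cp_ideal | exact: Cp_mul]. Qed.

Lemma Ip_submonoid : is_submonoid op (Ip op).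
Proof.
split; first exact: Ip1.
by move=> a b Ia Ib /Cp_mul [].
Qed.

End CancellationIdeal.

Theorem lemma6 (d : Order.disp_t) (T : porderType d) (one : T)
  (op : Monoid.com_law one) :
  is_ideal op (Cp op) /\
  (op_monotone op -> is_submonoid op (Ip op) /\ is_prime_ideal op (Cp op)).
Proof.
split; first exact: Cp_ideal.
by move=> op_mono; split; [exact: Ip_submonoid | exact: Cp_prime].
Qed.
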